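(* Let $\Sigma$ be a finite alphabet with $|\Sigma|\ge 2$, let $m,n$ be positive integers with $m\ge 2$, and let $\rho_1,\rho_2,\rho_3>0$ with $\rho_1+\rho_2+\rho_3\le 1$. The Markov chains with transition matrices $S^{\mathfrak{N}(n)}_{\rho_1,\rho_2,\rho_3}$, $S^{\mathfrak{N}_m(n)}_{\rho_1,\rho_2,\rho_3}$ and $S^{\mathfrak{N}'_m(n)}_{\rho_1,\rho_2,\rho_3}$ are ergodic (irreducible and aperiodic), and their stationary distributions are the uniform distributions on $\mathfrak{N}(n)$, $\mathfrak{N}_m(n)$ and $\mathfrak{N}'_m(n)$ respectively.
   Context: A non-deterministic automaton (NFA) over $\Sigma$ is a tuple $(Q,\Sigma,\Delta,I,F)$ with $Q$ a finite set of states, $\Delta\subseteq Q\times\Sigma\times Q$ the transitions, $I\subseteq Q$ the initial states and $F\subseteq Q$ the final states. The NFA is trim if every state is reachable by a path of transitions from an initial state and from every state some final state is reachable by a path of transitions. $\mathfrak{N}(n)$ is the set of trim NFAs over $\Sigma$ with state set $Q=\{1,\dots,n\}$. $\mathfrak{N}_m(n)$ is the set of automata in $\mathfrak{N}(n)$ such that for each state $p$ there are at most $m$ pairs $(a,q)$ with $(p,a,q)\in\Delta$. $\mathfrak{N}'_m(n)$ is the set of automata in $\mathfrak{N}(n)$ such that for each state $p$ and each letter $a$ there are at most $m$ states $q$ with $(p,a,q)\in\Delta$. For an automaton $\mathcal{A}=(Q,\Sigma,\Delta,I,F)$: $\mathsf{Ch_{init}}(\mathcal{A},q)$ is $\mathcal{A}$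 with $q$ removed from $I$ if $q\in I$ and added to $I$ otherwise; $\mathsf{Ch_{final}}(\mathcal{A},q)$ is defined similarly with $F$; $\mathsf{Ch_{trans}}(\mathcal{A},(p,a,q))$ is $\mathcal{A}$ with $(p,a,q)$ removed from $\Delta$ if present and added otherwise. For a class $\mathfrak{X}$ of automata with state set $Q=\{1,\dots,n\}$, the matrix $S^{\mathfrak{X}}_{\rho_1,\rho_2,\rho_3}$ on $\mathfrak{X}\times\mathfrak{X}$ is: for $x\ne y$, $S(x,y)=\rho_1/n$ if $y=\mathsf{Ch_{init}}(x,q)$ for some $q$; $S(x,y)=\rho_2/n$ if $y=\mathsf{Ch_{final}}(x,q)$ for some $q$; $S(x,y)=\rho_3/(|\Sigma|n^2)$ if $y=\mathsf{Ch_{trans}}(x,(p,a,q))$ for some $(p,a,q)\in Q\times\Sigma\times Q$; $S(x,y)=0$ otherwise; and $S(x,x)=1-\sum_{y\ne x}S(x,y)$. *)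

From mathcomp Require Import all_boot all_order all_algebra.
Set Implicit Arguments. Unset Strict Implicit. Unset Printing Implicit Defensive.
Import Order.TTheory GRing.Theory Num.Theory.
Local Open Scope ring_scope.

Section Automata.
Variables (Sigma : finType) (n : nat).

(* An automaton over Sigma with state set Q = 'I_n (= {1..n} up to relabelling):
   (initial states I, final states F, transitions Delta). *)
Definition nfa : finType :=
  ({set 'I_n} * {set 'I_n} * {set ('I_n * Sigma * 'I_n)})%type.

Definition initS (A : nfa) : {set 'I_n} := A.1.1.
Definition finalS (A : nfa) : {set 'I_n} := A.1.2.
Definition transS (A : nfa) : {set ('I_n * Sigma * 'I_n)} := A.2.

Definition step (A : nfa) : rel 'I_n :=
  fun p q => [exists a : Sigma, (p, a, q) \in transS A].

Definition trim (A : nfa) : bool :=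
  [forall q : 'I_n, [exists i in initS A, connect (step A) i q]] &&
  [forall q : 'I_n, [exists f in finalS A, connect (step A) q f]].

Definition classN : pred nfa := fun A => trim A.
Definition classNm (m : nat) : pred nfa := fun A =>
  trim A &&
  [forall p : 'I_n, #|[set aq : Sigma * 'I_n | (p, aq.1, aq.2) \in transS A]| <= m]%N.
Definition classN'm (m : nat) : pred nfa := fun A =>
  trim A &&
  [forall p : 'I_n, forall a : Sigma, #|[set q : 'I_n | (p, a, q) \in transS A]| <= m]%N.

Definition toggle (T : finType) (x : T) (B : {set T}) : {set T} :=
  if x \in B then B :\ x else x |: B.

Definition Ch_init (A : nfa) (q : 'I_n) : nfa := (toggle q (initS A), finalS A, transS A).
Definition Ch_final (A : nfa) (q : 'I_n) : nfa := (initS A, toggle q (finalS A), transS A).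
Definition Ch_trans (A : nfa) (t : 'I_n * Sigma * 'I_n) : nfa :=
  (initS A, finalS A, toggle t (transS A)).

Variable R : realFieldType.

Definition Soff (r1 r2 r3 : R) (x y : nfa) : R :=
  if [exists q, y == Ch_init x q] then r1 / n%:R
  else if [exists q, y == Ch_final x q] then r2 / n%:R
  else if [exists t, y == Ch_trans x t] then r3 / (#|Sigma|%:R * (n%:R) ^+ 2)
  else 0.

(* the matrix S^X_{r1,r2,r3} on X x X (only entries with x, y in X are meaningful) *)
Definition Smat (X : pred nfa) (r1 r2 r3 : R) (x y : nfa) : R :=
  if x == y then 1 - \sum_(z | X z && (z != x)) Soff r1 r2 r3 x z
  else Soff r1 r2 r3 x y.

End Automata.

Section Markov.
Variables (T : finType) (R : realFieldType).

Fixpoint Spow (X : pred T) (S : T -> T -> R) (k : nat) (x y : T) : R :=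
  match k with
  | 0 => (x == y)%:R
  | k'.+1 => \sum_(z | X z) S x z * Spow X S k' z y
  end.

Definition stochastic (X : pred T) (S : T -> T -> R) : Prop :=
  forall x, X x -> (forall y, X y -> 0 <= S x y) /\ \sum_(y | X y) S x y = 1.

Definition irreducible (X : pred T) (S : T -> T -> R) : Prop :=
  forall x y, X x -> X y -> exists k, 0 < Spow X S k x y.

Definition aperiodic (X : pred T) (S : T -> T -> R) : Prop :=
  forall x, X x -> forall d : nat,
    (forall k : nat, (0 < k)%N -> 0 < Spow X S k x x -> (d %| k)%N) -> d = 1%N.

Definition ergodic (X : pred T) (S : T -> T -> R) : Prop :=
  irreducible X S /\ aperiodic X S.

Definition distribution (X : pred T) (pi : T -> R) : Prop :=
  (forall x, X x -> 0 <= pi x) /\ \sum_(x | X x) pi x = 1.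

Definition stationary (X : pred T) (S : T -> T -> R) (pi : T -> R) : Prop :=
  forall y, X y -> \sum_(x | X x) pi x * S x y = pi y.

Definition ergodic_uniform (X : pred T) (S : T -> T -> R) : Prop :=
  stochastic X S /\ ergodic X S /\
  forall pi, distribution X pi ->
    (stationary X S pi <-> forall x, X x -> pi x = 1 / #|X|%:R).

End Markov.

Arguments classN Sigma n : clear implicits.
Arguments classNm Sigma n m : clear implicits.
Arguments classN'm Sigma n m : clear implicits.

(* Every move Ch_init, Ch_final, Ch_trans is an involution, so S is symmetric;
   its off-diagonal row sums are at most r1 + r2 + r3 <= 1, so S is stochastic.
   A symmetric stochastic matrix fixes the uniform distribution, and by a
   maximum principle an irreducible one fixes nothing else.  Irreducibility and
   aperiodicity come from a single lazy state, the automaton [hub] with every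
   state initial and final and no transition: any automaton of the class
   descends to [hub] through moves of positive probability (add initial states,
   add final states, delete transitions), and [hub] has a positive holding
   probability because flipping any of its initial states breaks trimness. *)

From mathcomp Require Import all_boot all_order all_algebra.
Set Implicit Arguments. Unset Strict Implicit.
Import Order.TTheory GRing.Theory Num.Theory.
Local Open Scope ring_scope.

Section SymmetricChain.
Variables (T : finType) (R : realFieldType) (X : pred T) (S : T -> T -> R).
Hypothesis S_stochastic : stochastic X S.

Lemma stochastic_ge0 x y : X x -> X y -> 0 <= S x y.
Proof. by move=> Xx; case: (S_stochastic Xx) => S_ge0 _; apply: S_ge0. Qed.

Lemma Spow_ge0 k x y : X x -> 0 <= Spow X S k x y.
Proof.
elim: k x => [|k IHk] x Xx /=; first by rewrite ler0n.
by apply: sumr_ge0 => z Xz; rewrite mulr_ge0 ?stochastic_ge0 ?IHk.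
Qed.

Lemma Spow_succ_gt0 k x z y : X x -> X z ->
  0 < S x z -> 0 < Spow X S k z y -> 0 < Spow X S k.+1 x y.
Proof.
move=> Xx Xz Sxz Skzy /=; rewrite (bigD1 z) //= ltr_pwDl ?mulr_gt0 //.
by apply: sumr_ge0 => w /andP[Xw _]; rewrite mulr_ge0 ?stochastic_ge0 ?Spow_ge0.
Qed.

Lemma Spow_succ_gt0P k x y : X x -> 0 < Spow X S k.+1 x y ->
  exists z, [/\ X z, 0 < S x z & 0 < Spow X S k z y].
Proof.
move=> Xx /= /lt0r_neq0/eqP/psumr_neq0P[z Xz|z /andP[Xz /lt0r_neq0]].
  by rewrite mulr_ge0 ?stochastic_ge0 ?Spow_ge0.
rewrite mulf_eq0 negb_or => /andP[Sxz_neq0 Skzy_neq0].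
by exists z; rewrite !lt0r Sxz_neq0 Skzy_neq0 stochastic_ge0 ?Spow_ge0.
Qed.

Lemma Spow_add_gt0 a b x z y : X x -> X z ->
  0 < Spow X S a x z -> 0 < Spow X S b z y -> 0 < Spow X S (a + b) x y.
Proof.
elim: a x => [|a IHa] x Xx Xz; first by rewrite /=; case: eqP => [->|_] //; rewrite ltxx.
case/(Spow_succ_gt0P Xx) => w [Xw Sxw Sawz] Sbzy.
by rewrite addSn (Spow_succ_gt0 Xx Xw Sxw) ?IHa.
Qed.

Hypothesis S_sym : forall x y, X x -> X y -> S x y = S y x.

Lemma Spow_sym_gt0 k x y : X x -> X y ->
  0 < Spow X S k x y -> 0 < Spow X S k y x.
Proof.
move=> + Xy; elim: k x => [|k IHk] x Xx; first by rewrite /= eq_sym.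
case/(Spow_succ_gt0P Xx) => w [Xw Sxw Skwy].
rewrite -addn1 (Spow_add_gt0 Xy Xw (IHk _ Xw Skwy)) //.
by rewrite (Spow_succ_gt0 (z := x)) 1?S_sym //= eqxx ltr01.
Qed.

Lemma stochastic_sum_col y : X y -> \sum_(x | X x) S x y = 1.
Proof.
move=> Xy; rewrite -(proj2 (S_stochastic Xy)).
by apply: eq_bigr => x Xx; apply: S_sym.
Qed.

Lemma uniform_stationary : stationary X S (fun=> 1 / #|X|%:R).
Proof. by move=> y Xy; rewrite -mulr_sumr stochastic_sum_col ?mulr1. Qed.

Section MaximumPrinciple.
Variables (pi : T -> R) (M : R).
Hypotheses (pi_stationary : stationary X S pi) (pi_leM : forall w, X w -> pi w <= M).

(* If pi x = M, stationarity at x writes 0 as a sum of nonnegative terms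
   (M - pi w) S w x, so every neighbour w of x also has pi w = M. *)
Lemma stationary_max_step x z : X x -> X z ->
  pi x = M -> 0 < S x z -> pi z = M.
Proof.
move=> Xx Xz pix Sxz.
have sum_eq0 : \sum_(w | X w) (M - pi w) * S w x = 0.
  under eq_bigr do rewrite mulrBl.
  by rewrite sumrB -mulr_sumr stochastic_sum_col // pi_stationary // pix mulr1 subrr.
have terms_ge0 w : X w -> 0 <= (M - pi w) * S w x.
  by move=> Xw; rewrite mulr_ge0 ?subr_ge0 ?pi_leM ?stochastic_ge0.
have /eqP := psumr_eq0P terms_ge0 sum_eq0 Xz.
by rewrite mulf_eq0 S_sym // (gt_eqF Sxz) orbF subr_eq0 => /eqP.
Qed.

Lemma stationary_max_Spow k x y : X x -> X y ->
  pi x = M -> 0 < Spow X S k x y -> pi y = M.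
Proof.
move=> + Xy; elim: k x => [|k IHk] x Xx pix.
  by rewrite /=; case: eqP => [<-|_] //; rewrite ltxx.
case/(Spow_succ_gt0P Xx) => w [Xw Sxw Skwy].
exact: IHk Xw (stationary_max_step Xx Xw pix Sxw) Skwy.
Qed.

End MaximumPrinciple.

Lemma stationary_uniform pi : irreducible X S ->
  distribution X pi -> stationary X S pi -> forall x, X x -> pi x = 1 / #|X|%:R.
Proof.
move=> S_irr [_ pi_sum1] pi_stationary.
have [x0 Xx0] : exists x0, X x0.
  apply/existsP; apply: contraPT pi_sum1 => /existsPn X0.
  by rewrite big_pred0 => [/esym/eqP|x]; rewrite ?oner_eq0 ?(negbTE (X0 x)).
have [xM XxM pi_leM] := @arg_maxP _ _ _ x0 X pi Xx0.
have pi_const y : X y -> pi y = pi xM.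
  move=> Xy; have [k Sk] := S_irr xM y XxM Xy.
  exact: (stationary_max_Spow pi_stationary pi_leM XxM Xy erefl Sk).
have card_pi : pi xM * #|X|%:R = 1.
  by rewrite mulr_natr -pi_sum1 -sumr_const; apply: eq_bigr => y Xy; rewrite pi_const.
have card_neq0 : #|X|%:R != 0 :> R.
  by apply: contra_eq_neq card_pi => ->; rewrite mulr0 eq_sym oner_neq0.
by move=> x Xx; apply: (mulIf card_neq0); rewrite pi_const // card_pi div1r mulVf.
Qed.

Section Hub.
Variable hub : T.
Hypotheses (X_hub : X hub) (S_hub_loop : 0 < S hub hub).
Hypothesis reach_hub : forall x, X x -> exists k, 0 < Spow X S k x hub.

Lemma irreducible_of_hub : irreducible X S.
Proof.
move=> x y Xx Xy; have [k Sk] := reach_hub Xx; have [l Sl] := reach_hub Xy.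
by exists (k + l); apply: (Spow_add_gt0 Xx X_hub Sk (Spow_sym_gt0 Xy X_hub Sl)).
Qed.

(* Going through the loop at the hub once or twice gives return times
   2k+1 and 2k+2 at every state. *)
Lemma aperiodic_of_hub : aperiodic X S.
Proof.
move=> x Xx d d_dvd; have [k Sk] := reach_hub Xx.
have Sk_back := Spow_sym_gt0 Xx X_hub Sk.
have loop j : 0 < Spow X S j.+1 hub hub.
  elim: j => [|j IHj]; last by rewrite (Spow_succ_gt0 (z := hub)).
  by rewrite (Spow_succ_gt0 (z := hub)) //= eqxx ltr01.
have return_gt0 j : 0 < Spow X S (k + (j.+1 + k)) x x.
  exact: Spow_add_gt0 Xx X_hub Sk (Spow_add_gt0 X_hub X_hub (loop j) Sk_back).
have d_odd : (d %| k + (1 + k))%N.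
  by apply: d_dvd (return_gt0 0%N); rewrite addnCA.
have d_even : (d %| k + (1 + k) + 1)%N.
  by apply: d_dvd; rewrite addn1 // -addnS; apply: return_gt0 1%N.
by move: d_even; rewrite dvdn_addr // dvdn1 => /eqP.
Qed.

Lemma ergodic_uniform_of_hub : ergodic_uniform X S.
Proof.
split=> //; split; first by split; [apply: irreducible_of_hub|apply: aperiodic_of_hub].
move=> pi pi_distr; split; first exact: stationary_uniform irreducible_of_hub pi_distr.
move=> pi_unif y Xy; rewrite pi_unif // -(uniform_stationary Xy).
by apply: eq_bigr => x Xx; rewrite pi_unif.
Qed.

End Hub.
End SymmetricChain.

Lemma toggleK (T : finType) (x : T) : involutive (toggle x).
Proof.
move=> B; rewrite /toggle; have [xB|xB] := boolP (x \in B).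
  by rewrite in_setD1 eqxx /= setD1K.
by rewrite in_setU1 eqxx /= setU1K.
Qed.

Lemma toggle_neq (T : finType) (x : T) (B : {set T}) : toggle x B != B.
Proof.
apply/eqP; rewrite /toggle; have [xB|xB] := boolP (x \in B) => /setP/(_ x).
  by rewrite in_setD1 eqxx xB.
by rewrite in_setU1 eqxx (negbTE xB).
Qed.

Lemma card_setC_toggle (T : finType) (x : T) (B : {set T}) :
  x \notin B -> (#|~: toggle x B| < #|~: B|)%N.
Proof.
move=> xB; rewrite /toggle (negbTE xB); apply: proper_card.
by apply/properP; split; [rewrite setCS subsetUr|exists x; rewrite !inE ?eqxx].
Qed.

Lemma card_toggle (T : finType) (x : T) (B : {set T}) :
  x \in B -> (#|toggle x B| < #|B|)%N.
Proof. by move=> xB; rewrite /toggle xB (cardsD1 x B) xB. Qed.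

Lemma exists_involutive_sym (I T : finType) (f : T -> I -> T) :
  (forall i, involutive (f^~ i)) ->
  forall x y, [exists i, y == f x i] = [exists i, x == f y i].
Proof.
by move=> fK x y; apply/existsP/existsP => -[i /eqP->]; exists i; rewrite fK.
Qed.

Section Automata.
Variables (Sigma : finType) (n : nat).
Local Notation automaton := (nfa Sigma n).
Local Notation transition := ('I_n * Sigma * 'I_n)%type.

Lemma Ch_initK (A : automaton) q : Ch_init (Ch_init A q) q = A.
Proof. by case: A => [[I F] D]; rewrite /Ch_init /= toggleK. Qed.
Lemma Ch_finalK (A : automaton) q : Ch_final (Ch_final A q) q = A.
Proof. by case: A => [[I F] D]; rewrite /Ch_final /= toggleK. Qed.
Lemma Ch_transK (A : automaton) t : Ch_trans (Ch_trans A t) t = A.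
Proof. by case: A => [[I F] D]; rewrite /Ch_trans /= toggleK. Qed.

Lemma Ch_init_neq (A : automaton) q : Ch_init A q != A.
Proof. by apply: contra_neq (toggle_neq q (initS A)) => /(congr1 (@initS _ _)). Qed.
Lemma Ch_final_neq (A : automaton) q : Ch_final A q != A.
Proof. by apply: contra_neq (toggle_neq q (finalS A)) => /(congr1 (@finalS _ _)). Qed.
Lemma Ch_trans_neq (A : automaton) t : Ch_trans A t != A.
Proof. by apply: contra_neq (toggle_neq t (transS A)) => /(congr1 (@transS _ _)). Qed.

Lemma trim_full (A : automaton) : initS A = setT -> finalS A = setT -> trim A.
Proof.
move=> AI AF; apply/andP; split; apply/forallP => q; apply/existsP; exists q.
  by rewrite AI inE connect0.
by rewrite AF inE connect0.
Qed.

Lemma trim_subset (A B : automaton) : transS A = transS B ->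
  initS A \subset initS B -> finalS A \subset finalS B -> trim A -> trim B.
Proof.
rewrite /trim /step => -> /subsetP sI /subsetP sF /andP[/forallP rI /forallP rF].
apply/andP; split; apply/forallP => q.
  by have /existsP[i /andP[Ai ?]] := rI q; apply/existsP; exists i; rewrite sI.
by have /existsP[f /andP[Af ?]] := rF q; apply/existsP; exists f; rewrite sF.
Qed.

Lemma trim_Ch_init (A : automaton) q :
  q \notin initS A -> trim A -> trim (Ch_init A q).
Proof.
move=> qA; apply: trim_subset; rewrite /Ch_init //= ?subxx //.
by rewrite /toggle (negbTE qA) subsetUr.
Qed.

Lemma trim_Ch_final (A : automaton) q :
  q \notin finalS A -> trim A -> trim (Ch_final A q).
Proof.
move=> qA; apply: trim_subset; rewrite /Ch_final //= ?subxx //.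
by rewrite /toggle (negbTE qA) subsetUr.
Qed.

Definition outdeg_le (m : nat) : pred {set transition} := fun D =>
  [forall p : 'I_n, #|[set aq : Sigma * 'I_n | (p, aq.1, aq.2) \in D]| <= m]%N.

Definition letter_outdeg_le (m : nat) : pred {set transition} := fun D =>
  [forall p : 'I_n, forall a : Sigma, #|[set q : 'I_n | (p, a, q) \in D]| <= m]%N.

Lemma outdeg_le_subset m (D D' : {set transition}) :
  D' \subset D -> outdeg_le m D -> outdeg_le m D'.
Proof.
move=> /subsetP sD /forallP deg_D; apply/forallP => p.
by apply: leq_trans (deg_D p); apply/subset_leq_card/subsetP => aq; rewrite !inE => /sD.
Qed.

Lemma letter_outdeg_le_subset m (D D' : {set transition}) :
  D' \subset D -> letter_outdeg_le m D -> letter_outdeg_le m D'.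
Proof.
move=> /subsetP sD /forallP deg_D; apply/forallP => p; apply/forallP => a.
apply: leq_trans (forallP (deg_D p) a).
by apply/subset_leq_card/subsetP => q; rewrite !inE => /sD.
Qed.

Lemma outdeg_le_set0 m : outdeg_le m set0.
Proof.
apply/forallP => p; rewrite (_ : [set _ | _] = set0) ?cards0 //.
by apply/setP => aq; rewrite !inE.
Qed.

Lemma letter_outdeg_le_set0 m : letter_outdeg_le m set0.
Proof.
apply/forallP => p; apply/forallP => a; rewrite (_ : [set _ | _] = set0) ?cards0 //.
by apply/setP => q; rewrite !inE.
Qed.

Section Rates.
Variables (R : realFieldType) (r1 r2 r3 : R).
Hypotheses (r1_gt0 : 0 < r1) (r2_gt0 : 0 < r2) (r3_gt0 : 0 < r3).
Hypotheses (r_sum_le1 : r1 + r2 + r3 <= 1) (n_gt0 : (0 < n)%N).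
Hypothesis Sigma_gt0 : (0 < #|Sigma|)%N.

Local Notation init_rate := (r1 / n%:R).
Local Notation final_rate := (r2 / n%:R).
Local Notation trans_rate := (r3 / (#|Sigma|%:R * n%:R ^+ 2)).

Lemma rates_gt0 : [/\ 0 < init_rate, 0 < final_rate & 0 < trans_rate].
Proof. by rewrite !divr_gt0 ?mulr_gt0 ?exprn_gt0 ?ltr0n. Qed.

Definition init_adj (x y : automaton) := [exists q, y == Ch_init x q].
Definition final_adj (x y : automaton) := [exists q, y == Ch_final x q].
Definition trans_adj (x y : automaton) := [exists t, y == Ch_trans x t].

Lemma SoffE (x y : automaton) : Soff r1 r2 r3 x y =
  if init_adj x y then init_rate else if final_adj x y then final_rate
  else if trans_adj x y then trans_rate else 0.
Proof. by []. Qed.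

Lemma Soff_ge0 (x y : automaton) : 0 <= Soff r1 r2 r3 x y.
Proof.
rewrite SoffE; case: rates_gt0 => cI cF cT; do 3?[case: ifP => _].
- exact: ltW cI.
- exact: ltW cF.
- exact: ltW cT.
- exact: lexx.
Qed.

Lemma Soff_gt0 (x y : automaton) :
  [|| init_adj x y, final_adj x y | trans_adj x y] -> 0 < Soff r1 r2 r3 x y.
Proof.
rewrite SoffE; case: rates_gt0 => cI cF cT.
case: ifP => [_ _|_]; first exact: cI.
case: ifP => [_ _|_]; first exact: cF.
by case: ifP => [_ _|_ //]; apply: cT.
Qed.

Lemma init_adj_Ch_init (x : automaton) q : init_adj x (Ch_init x q).
Proof. by apply/existsP; exists q. Qed.
Lemma final_adj_Ch_final (x : automaton) q : final_adj x (Ch_final x q).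
Proof. by apply/existsP; exists q. Qed.
Lemma trans_adj_Ch_trans (x : automaton) t : trans_adj x (Ch_trans x t).
Proof. by apply/existsP; exists t. Qed.

Lemma init_adj_sym (x y : automaton) : init_adj x y = init_adj y x.
Proof. exact: exists_involutive_sym (fun q A => Ch_initK A q) x y. Qed.
Lemma final_adj_sym (x y : automaton) : final_adj x y = final_adj y x.
Proof. exact: exists_involutive_sym (fun q A => Ch_finalK A q) x y. Qed.
Lemma trans_adj_sym (x y : automaton) : trans_adj x y = trans_adj y x.
Proof. exact: exists_involutive_sym (fun t A => Ch_transK A t) x y. Qed.

Lemma Soff_sym (x y : automaton) : Soff r1 r2 r3 x y = Soff r1 r2 r3 y x.
Proof. by rewrite !SoffE (init_adj_sym x) (final_adj_sym x) (trans_adj_sym x). Qed.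

Lemma Smat_sym (X : pred automaton) (x y : automaton) :
  Smat X r1 r2 r3 x y = Smat X r1 r2 r3 y x.
Proof. by rewrite /Smat eq_sym; case: eqP => [->|_] //; rewrite Soff_sym. Qed.

Lemma Soff_row_le (X : pred automaton) (x : automaton) (A : {set 'I_n}) :
  (forall q, q \notin A -> ~~ X (Ch_init x q)) ->
  \sum_(y | X y && (y != x)) Soff r1 r2 r3 x y <= init_rate * #|A|%:R + r2 + r3.
Proof.
move=> A_out; case: rates_gt0 => cI_gt0 cF_gt0 cT_gt0.
set BI := [set Ch_init x q | q in A].
set BF := [set Ch_final x q | q : 'I_n].
set BT := [set Ch_trans x t | t : transition].
pose w (c : R) (B : {set automaton}) y := if y \in B then c else 0.
have w_ge0 c B y : 0 < c -> 0 <= w c B y by rewrite /w; case: ifP => // _ /ltW.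
have Soff_le y : X y -> Soff r1 r2 r3 x y <=
    w init_rate BI y + w final_rate BF y + w trans_rate BT y.
  move=> Xy; rewrite /Soff /w.
  case: ifP => [/existsP[q /eqP Ey] | _].
    have qA : q \in A by apply: contraLR Xy => /A_out; rewrite Ey.
    by rewrite Ey imset_f // -addrA lerDl addr_ge0 ?w_ge0.
  case: ifP => [/existsP[q /eqP ->] | _].
    by rewrite imset_f // addrAC lerDr addr_ge0 ?w_ge0.
  case: ifP => [/existsP[t /eqP ->] | _].
    by rewrite imset_f // lerDr addr_ge0 ?w_ge0.
  by rewrite !addr_ge0 ?w_ge0.
have sum_w c B : \sum_y w c B y = c *+ #|B|.
  by rewrite -big_mkcond sumr_const.
apply: le_trans
  (_ : \sum_y (w init_rate BI y + w final_rate BF y + w trans_rate BT y) <= _).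
  rewrite [X in X <= _]big_mkcond /=; apply: ler_sum => y _.
  by case: ifP => [/andP[Xy _]|_]; rewrite ?Soff_le ?addr_ge0 ?w_ge0.
rewrite !big_split /= !sum_w.
have n_neq0 : n%:R != 0 :> R by rewrite pnatr_eq0 -lt0n.
have BI_le : init_rate *+ #|BI| <= init_rate * #|A|%:R.
  by rewrite -mulr_natr (ler_wpM2l (ltW cI_gt0)) // ler_nat leq_imset_card.
have BF_le : final_rate *+ #|BF| <= r2.
  apply: le_trans (ler_wpMn2l (ltW cF_gt0) (leq_imset_card _ _)) _.
  by rewrite card_ord -(mulr_natr final_rate) divfK.
have BT_le : trans_rate *+ #|BT| <= r3.
  apply: le_trans (ler_wpMn2l (ltW cT_gt0) (leq_imset_card _ _)) _.
  rewrite !card_prod !card_ord -(mulr_natr trans_rate) !natrM.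
  rewrite [n%:R * _ * _]mulrAC -expr2 [_ ^+ 2 * _]mulrC.
  by rewrite divfK // mulf_neq0 ?expf_neq0 ?pnatr_eq0 -?lt0n.
exact: lerD (lerD BI_le BF_le) BT_le.
Qed.

Lemma Soff_row_le1 (X : pred automaton) (x : automaton) :
  \sum_(y | X y && (y != x)) Soff r1 r2 r3 x y <= 1.
Proof.
apply: le_trans r_sum_le1; have := @Soff_row_le X x setT.
by rewrite cardsT card_ord divfK ?pnatr_eq0 -?lt0n // => -> // q; rewrite inE.
Qed.

Lemma Smat_stochastic (X : pred automaton) : stochastic X (Smat X r1 r2 r3).
Proof.
move=> x Xx; split=> [y Xy|].
  rewrite /Smat; case: eqP => _; last exact: Soff_ge0.
  by rewrite subr_ge0 Soff_row_le1.
rewrite (bigD1 x) //= /Smat eqxx.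
under eq_bigr => y /andP[_ /negbTE yx] do rewrite eq_sym yx.
exact: subrK.
Qed.

Lemma Smat_adj_gt0 (X : pred automaton) (x y : automaton) : y != x ->
  [|| init_adj x y, final_adj x y | trans_adj x y] -> 0 < Smat X r1 r2 r3 x y.
Proof. by rewrite /Smat eq_sym => /negbTE->; apply: Soff_gt0. Qed.

Definition hub : automaton := ([set: 'I_n], [set: 'I_n], set0).

Definition hub_dist (A : automaton) : nat :=
  #|~: initS A| + #|~: finalS A| + #|transS A|.

Lemma eq_hub (A : automaton) :
  initS A = setT -> finalS A = setT -> transS A = set0 -> A = hub.
Proof. by case: A => [[I F] D]; rewrite /initS /finalS /transS /= => -> -> ->. Qed.

Lemma connect_no_trans (A : automaton) p q :
  transS A = set0 -> connect (step A) p q -> p = q.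
Proof.
move=> A0 /connectP[[|s ps] /= path_ps ->] //.
by move: path_ps => /andP[/existsP[a]]; rewrite A0 inE.
Qed.

Lemma Ch_init_hub_not_trim q : ~~ trim (Ch_init hub q).
Proof.
apply/negP => /andP[/forallP/(_ q)/existsP[i /andP[init_i /connect_no_trans i_q]] _].
by move: init_i; rewrite (i_q erefl) /Ch_init /= /toggle in_setT !inE eqxx.
Qed.

Section Class.
Variables (X : pred automaton) (P : pred {set transition}).
Hypothesis X_def : forall A, X A = trim A && P (transS A).
Hypothesis P_subset : forall D D' : {set transition}, D' \subset D -> P D -> P D'.
Hypothesis P_set0 : P set0.

Lemma hub_in_class : X hub.
Proof. by rewrite X_def P_set0 andbT trim_full. Qed.

Lemma Smat_hub_gt0 : 0 < Smat X r1 r2 r3 hub hub.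
Proof.
pose q0 : 'I_n := Ordinal n_gt0.
have hub_out q : q \notin [set~ q0] -> ~~ X (Ch_init hub q).
  by rewrite !inE negbK X_def => /eqP->; rewrite (negbTE (Ch_init_hub_not_trim q0)).
rewrite /Smat eqxx subr_gt0 (le_lt_trans (Soff_row_le hub_out)) //.
apply: lt_le_trans r_sum_le1; rewrite -!addrA ltrD2r cardsC1 card_ord.
rewrite -[ltRHS](@divfK _ n%:R) ?pnatr_eq0 -?lt0n // ltr_pM2l ?divr_gt0 ?ltr0n //.
by rewrite ltr_nat prednK.
Qed.

Lemma class_Ch_init x q : X x -> q \notin initS x -> X (Ch_init x q).
Proof. by rewrite !X_def => /andP[trim_x Px] qx; rewrite trim_Ch_init. Qed.

Lemma class_Ch_final x q : X x -> q \notin finalS x -> X (Ch_final x q).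
Proof. by rewrite !X_def => /andP[trim_x Px] qx; rewrite trim_Ch_final. Qed.

Lemma class_Ch_trans x t : X x -> initS x = setT -> finalS x = setT ->
  t \in transS x -> X (Ch_trans x t).
Proof.
rewrite !X_def => /andP[_ Px] xI xF tx; rewrite trim_full //=.
by apply: P_subset Px; rewrite /toggle tx subsetDl.
Qed.

Lemma class_step_to_hub x : X x -> x != hub ->
  exists y, [/\ X y, 0 < Smat X r1 r2 r3 x y & (hub_dist y < hub_dist x)%N].
Proof.
move=> Xx x_hub; rewrite /hub_dist.
case: (pickP (fun q => q \notin initS x)) => [q qx | xI].
  exists (Ch_init x q).
  by rewrite class_Ch_init ?Smat_adj_gt0 ?Ch_init_neq ?init_adj_Ch_init ?ltn_add2r
    ?card_setC_toggle.
have {}xI : initS x = setT by apply/setP => q; have /negbFE := xI q; rewrite inE.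
case: (pickP (fun q => q \notin finalS x)) => [q qx | xF].
  exists (Ch_final x q).
  by rewrite class_Ch_final ?Smat_adj_gt0 ?Ch_final_neq ?final_adj_Ch_final ?orbT
    ?ltn_add2r ?ltn_add2l ?card_setC_toggle.
have {}xF : finalS x = setT by apply/setP => q; have /negbFE := xF q; rewrite inE.
have [x0|[t tx]] := set_0Vmem (transS x).
  by case/eqP: x_hub; apply: eq_hub.
exists (Ch_trans x t).
by rewrite class_Ch_trans ?Smat_adj_gt0 ?Ch_trans_neq ?trans_adj_Ch_trans ?orbT
  ?ltn_add2l ?card_toggle.
Qed.

Lemma class_reach_hub x : X x -> exists k, 0 < Spow X (Smat X r1 r2 r3) k x hub.
Proof.
have [d] := ubnP (hub_dist x); elim: d x => // d IHd x /ltnSE dist_x Xx.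
have [->|x_hub] := eqVneq x hub; first by exists 0%N; rewrite /= eqxx ltr01.
have [y [Xy Sxy yx]] := class_step_to_hub Xx x_hub.
have [k Sk] := IHd y (leq_trans yx dist_x) Xy.
by exists k.+1; exact: (Spow_succ_gt0 (@Smat_stochastic X) Xx Xy Sxy Sk).
Qed.

Lemma class_ergodic_uniform : ergodic_uniform X (Smat X r1 r2 r3).
Proof.
apply: (ergodic_uniform_of_hub (@Smat_stochastic X) _ hub_in_class Smat_hub_gt0).
  by move=> x y _ _; apply: Smat_sym.
exact: class_reach_hub.
Qed.

End Class.
End Rates.
End Automata.

Theorem proposition1 (R : realFieldType) (Sigma : finType) (m n : nat)
  (r1 r2 r3 : R) :
  (2 <= #|Sigma|)%N -> (0 < n)%N -> (2 <= m)%N ->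
  0 < r1 -> 0 < r2 -> 0 < r3 -> r1 + r2 + r3 <= 1 ->
  [/\ ergodic_uniform (classN Sigma n) (Smat (classN Sigma n) r1 r2 r3),
      ergodic_uniform (classNm Sigma n m) (Smat (classNm Sigma n m) r1 r2 r3)
    & ergodic_uniform (classN'm Sigma n m) (Smat (classN'm Sigma n m) r1 r2 r3)].
Proof.
move=> Sigma_ge2 n_gt0 _ r1_gt0 r2_gt0 r3_gt0 r_sum_le1.
have Sigma_gt0 : (0 < #|Sigma|)%N by apply: ltnW.
have class_ok := class_ergodic_uniform r1_gt0 r2_gt0 r3_gt0 r_sum_le1 n_gt0 Sigma_gt0.
split.
- by apply: (class_ok _ predT) => // A; rewrite andbT.
- exact: (class_ok _ _ _ (@outdeg_le_subset _ _ m) (outdeg_le_set0 _ _ m)).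
- exact: (class_ok _ _ _ (@letter_outdeg_le_subset _ _ m) (letter_outdeg_le_set0 _ _ m)).
Qed.
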